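(* Let $k\ge1$, let $c\in\mathcal{S}_k^\alpha\setminus\{\mathbf{0}\}$, and let $s_i^k$ be the $i$-th row of $G_k^\alpha$, $i\in\{1,\dots,k\}$. Then, for every $i\in\{1,\dots,k\}$, $c$ is equal to $\gamma^{\nu(c)}s_i^k$ up to a permutation of coordinates.
   Context: Let $R$ be a finite commutative chain ring with maximal ideal $\langle\gamma\rangle$, nilpotency index $s$ and residue field $R/\langle\gamma\rangle\cong\mathbb{F}_q$. Fix coset representatives $T=\{e_0,\dots,e_{q-1}\}$ with $e_0=0,e_1=1$, ordered $e_0<\dots<e_{q-1}$; each $r\in R$ is uniquely $\sum_{i=0}^{s-1}r_i\gamma^i$, $r_i\in T$; order $R$ by $x>y$ iff $x_i>y_i$ in $T$ for the largest $i$ with $x_i\neq y_i$; list $R=\{\rho_0,\dots,\rho_{q^s-1}\}$ increasingly. $\mathbf{a}^{(m)}$ is the constant vector of length $m$. Define $G_1^\alpha=(\rho_0\ \cdots\ \rho_{q^s-1})$ and, for $k>1$, $G_k^\alpha$ as the $k\times q^{sk}$ matrix of $q^s$ column blocks, the $j$-th having first row $\boldsymbol{\rho_j}^{(q^{s(k-1)})}$ and $G_{k-1}^\alpha$ below. $\mathcal{S}_k^\alpha$ is the $R$-submodule of $R^{q^{sk}}$ generated by the rows of $G_k^\alpha$. Valuation: for $x\in R\setminus\{0\}$, $\nu(x)$ is the largest $m$ with $x=\gamma^m\beta$, $\beta$ a unit; $\nu(0)=\infty$; for $x\in R^n$, $\nu(x)=\min_i\nu(x_i)$. *)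

From mathcomp Require Import all_boot all_order all_algebra all_fingroup.
Set Implicit Arguments. Unset Strict Implicit. Unset Printing Implicit Defensive.
Import GRing.Theory.
Local Open Scope ring_scope.

Section ChainRing.
Variable R : finComUnitRingType.

Definition in_ideal (gamma x : R) : Prop := exists y : R, x = gamma * y.

(* R is a finite commutative chain ring with maximal ideal <gamma> and
   nilpotency index s: the non-units are exactly the multiples of gamma
   (i.e. R is local with principal maximal ideal <gamma>), and s is the
   least natural number with gamma^s = 0. *)
Definition chain_ring (gamma : R) (s : nat) : Prop :=
  [/\ forall x : R, x \isn't a GRing.unit <-> in_ideal gamma x,
      (0 < s)%N, gamma ^+ s = 0 & gamma ^+ s.-1 != 0].

(* T = [:: e_0; ...; e_(q-1)] (listed in the fixed order e_0 < ... < e_(q-1))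
   is a set of coset representatives of R / <gamma>, with e_0 = 0, e_1 = 1. *)
Definition coset_reps (gamma : R) (T : seq R) : Prop :=
  [/\ (1 < size T)%N, T`_0 = 0, T`_1 = 1 &
      forall r : R, exists! i : nat, (i < size T)%N /\ in_ideal gamma (r - T`_i)].

Variables (gamma : R) (s : nat) (T : seq R).

(* q^s = |R| *)
Definition Nq : nat := (size T ^ s)%N.

(* rho_j, j < q^s: the element whose gamma-adic digits (in T) are the base-q
   digits of j; digit i has weight q^i, so increasing j is exactly the order
   x > y iff x_i > y_i for the largest i with x_i <> y_i. *)
Definition rho (j : nat) : R :=
  \sum_(i < s) T`_((j %/ (size T ^ i)) %% size T) * gamma ^+ i.

(* Entry (row i, column m), 0-indexed, of G_k^alpha, following the recursive
   definition: column block j = m / N^(k-1) has first row rho_j and G_(k-1)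
   below (at column m mod N^(k-1)). *)
Fixpoint Gentry (k i m : nat) : R :=
  match k with
  | 0 => 0
  | k'.+1 => match i with
             | 0 => rho (m %/ (Nq ^ k'))
             | i'.+1 => Gentry k' i' (m %% (Nq ^ k'))
             end
  end.

Definition Gmx (k : nat) : 'M[R]_(k, Nq ^ k) := \matrix_(i < k, m < Nq ^ k) Gentry k i m.

Definition in_Sk (k : nat) (c : 'rV[R]_(Nq ^ k)) : Prop :=
  exists a : 'rV[R]_k, c = a *m Gmx k.

(* valuation of a nonzero element: largest m with x = gamma^m * beta, beta unit
   (necessarily m < s since gamma^s = 0); nu 0 = s stands for infinity. *)
Definition nu (x : R) : nat :=
  if x == 0 then s else
  \max_(m < s | [exists b : R, (b \is a GRing.unit) && (x == gamma ^+ m * b)]) m.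

Definition nu_vec (n : nat) (c : 'rV[R]_n) : nat := \big[minn/s]_(j < n) nu (c 0 j).

End ChainRing.

From mathcomp Require Import all_boot all_order all_algebra all_fingroup.
From mathcomp Require Import zify ring.
Set Implicit Arguments. Unset Strict Implicit. Unset Printing Implicit Defensive.
Import GRing.Theory.
Local Open Scope ring_scope.

(* The columns of G_k^alpha enumerate R^k exactly once: the gamma-adic digits
   of rho_j are the base-q digits of j, and the block structure of G_k^alpha
   is the base-q^s expansion of the column index. Hence if c = a G_k^alpha,
   every a_l is an entry of c, so a = gamma^nu(c) b, and some b_i0 is a unit,
   since otherwise gamma^(nu(c)+1) would divide every entry of c. Replacing
   the i0-th coordinate of x in R^k by b.x and then swapping coordinates i and
   i0 is a bijection of R^k; transported to column indices, it gives a
   permutation sigma with (b G_k^alpha)_j = (G_k^alpha)_(i, sigma j), while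
   c = gamma^nu(c) b G_k^alpha. *)

Section LinearFormPermutation.
Variables (R : comUnitRingType) (k : nat).

Definition set_coord_form (b : 'rV[R]_k) (i0 : 'I_k) (x : 'cV[R]_k) : 'cV[R]_k :=
  \col_l (if l == i0 then (b *m x) 0 0 else x l 0).

Lemma set_coord_form_inj (b : 'rV[R]_k) (i0 : 'I_k) :
  b 0 i0 \is a GRing.unit -> injective (set_coord_form b i0).
Proof.
move=> ub x y /matrixP exy.
have eq_off l : l != i0 -> x l 0 = y l 0.
  by move=> nl; have := exy l 0; rewrite !mxE (negbTE nl).
apply/matrixP => l j; rewrite (ord1 j).
have [->|/eq_off//] := eqVneq l i0.
have := exy i0 0; rewrite !mxE eqxx (bigD1 i0) // [X in _ = X -> _](bigD1 i0) //=.
rewrite (eq_bigr (fun m => b 0 m * y m 0)) => [/addIr/(mulrI ub)//|m nm].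
by rewrite eq_off.
Qed.

Lemma mulmx_row_perm n (M : 'M[R]_(k, n)) (b : 'rV_k) (i0 i : 'I_k) :
  bijective (fun j => col j M) -> b 0 i0 \is a GRing.unit ->
  exists sigma : 'S_n, forall j, (b *m M) 0 j = M i (sigma j).
Proof.
move=> [colV colK colVK] ub.
pose f j := colV (row_perm (tperm i i0) (set_coord_form b i0 (col j M))).
have f_inj : injective f.
  have swapK : involutive (@row_perm R _ 1 (tperm i i0)).
    by move=> A; rewrite -row_permM tperm2 row_perm1.
  move=> j1 j2 /(can_inj colVK) /(inv_inj swapK).
  by move/(set_coord_form_inj ub)/(can_inj colK).
exists (perm f_inj) => j.
rewrite permE; have -> : M i (f j) = col (f j) M i 0 by rewrite mxE.
rewrite colVK !mxE tpermL eqxx.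
by apply: eq_bigr => l _; rewrite !mxE.
Qed.

End LinearFormPermutation.

Section ChainRing.
Variables (R : finComUnitRingType) (gamma : R) (s : nat).
Hypothesis hR : chain_ring gamma s.

Lemma nonunit_in_ideal x : x \isn't a GRing.unit -> in_ideal gamma x.
Proof. by case: hR => H _ _ _; move/H. Qed.

Lemma mul_gamma_nonunit y : gamma * y \isn't a GRing.unit.
Proof. by case: hR => H _ _ _; apply/H; exists y. Qed.

Lemma unitrB_mul_gamma u z : u \is a GRing.unit -> u - gamma * z \is a GRing.unit.
Proof.
move=> uu; apply: contraT => /nonunit_in_ideal [w ew].
have uE : u = gamma * (w + z) by rewrite mulrDr -ew subrK.
by rewrite uE (negbTE (mul_gamma_nonunit _)) in uu.
Qed.

Lemma expr_gamma_neq0 n : (n < s)%N -> gamma ^+ n != 0.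
Proof.
case: hR => _ _ _ + ns; apply: contraNneq => gn0.
by rewrite -(subnK (_ : n <= s.-1)%N) ?exprD ?gn0 ?mulr0 //; lia.
Qed.

Lemma mul_expr_gamma_unit_neq0 n u :
  (n < s)%N -> u \is a GRing.unit -> gamma ^+ n * u != 0.
Proof.
move=> ns uu; apply: contraNneq (expr_gamma_neq0 ns) => gnu0.
by apply/eqP/(mulIr uu); rewrite gnu0 mul0r.
Qed.

Lemma gamma_unit_factor x : x != 0 ->
  exists2 m, (m < s)%N & exists2 b, b \is a GRing.unit & x = gamma ^+ m * b.
Proof.
move=> x0.
have factor_or_dvd n : (n <= s)%N -> (exists2 m, (m < n)%N &
    exists2 b, b \is a GRing.unit & x = gamma ^+ m * b) \/ in_ideal (gamma ^+ n) x.
  elim: n => [_|n IH ns]; first by right; exists x; rewrite mul1r.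
  have [[m mn fm]|[y ->]] := IH (ltnW ns); first by left; exists m => //; lia.
  have [uy|/nonunit_in_ideal [z ->]] := boolP (y \is a GRing.unit).
    by left; exists n => //; exists y.
  by right; exists z; rewrite mulrA -exprSr.
have [[m ms fm]|[y xy]] := factor_or_dvd s (leqnn s); first by exists m.
by move: x0; case: hR => _ _ gs _; rewrite xy gs mul0r eqxx.
Qed.

Lemma nu_spec x : x != 0 -> (nu gamma s x < s)%N /\
  exists2 b, b \is a GRing.unit & x = gamma ^+ nu gamma s x * b.
Proof.
move=> x0; rewrite /nu (negbTE x0).
set P := fun m : 'I_s => [exists b, (b \is a GRing.unit) && (x == gamma ^+ m * b)].
have [m ms [b ub xb]] := gamma_unit_factor x0.
have : (0 < #|P|)%N.
  apply/card_gt0P; exists (Ordinal ms).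
  by apply/existsP; exists b; rewrite ub xb eqxx.
case/(eq_bigmax_cond (fun m : 'I_s => nat_of_ord m)) => m' Pm' ->.
by split=> //; have /existsP[b' /andP[ub' /eqP]] := Pm'; exists b'.
Qed.

Lemma nu_vec_spec n (c : 'rV[R]_n) : c != 0 ->
  let v := nu_vec gamma s c in
  [/\ (v < s)%N, forall j, in_ideal (gamma ^+ v) (c 0 j) &
      exists j, exists2 u, u \is a GRing.unit & c 0 j = gamma ^+ v * u].
Proof.
move=> c0 v.
have v_le j : (v <= nu gamma s (c 0%R j))%N.
  by rewrite /v /nu_vec -minEnat -leEnat; apply: Order.TotalTheory.bigmin_le.
have [j0 cj0] : exists j, c 0 j != 0.
  apply/existsP; apply: contraNT c0 => /existsPn c0.
  by apply/eqP/rowP => j; rewrite mxE; apply/eqP/negPn.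
have vs : (v < s)%N := leq_ltn_trans (v_le j0) (nu_spec cj0).1.
have [j1 vj1] : exists j, v = nu gamma s (c 0 j).
  have : v = s \/ exists j, v = nu gamma s (c 0 j).
    apply: (big_ind (fun m => m = s \/ exists j, m = nu gamma s (c 0 j))).
    - by left.
    - by move=> x y; rewrite /minn; case: ifP.
    - by move=> j _; right; exists j.
  by case=> // vs'; move: vs; rewrite vs' ltnn.
have cj1 : c 0 j1 != 0.
  by apply: contraTneq vs => cj0'; rewrite vj1 /nu cj0' eqxx ltnn.
split=> //; last by exists j1; rewrite vj1; case: (nu_spec cj1).
move=> j; have [->|cj] := eqVneq (c 0 j) 0; first by exists 0; rewrite mulr0.
have [_ [b _ ->]] := nu_spec cj; exists (gamma ^+ (nu gamma s (c 0 j) - v) * b).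
by rewrite mulrA -exprD subnKC ?v_le.
Qed.

Lemma mulmx_nu_vec_factor k n (M : 'M[R]_(k, n)) (a : 'rV_k) (c : 'rV_n) :
  (forall x : 'cV_k, exists j, col j M = x) -> c = a *m M -> c != 0 ->
  exists2 b : 'rV_k, c = gamma ^+ nu_vec gamma s c *: (b *m M) &
    exists i0, b 0 i0 \is a GRing.unit.
Proof.
move=> Msurj ca c0; have [vs cdiv [j1 [u uu cu]]] := nu_vec_spec c0.
set v := nu_vec gamma s c in vs cdiv cu *.
have cE j : c 0 j = (a *m col j M) 0 0.
  by rewrite ca !mxE; apply: eq_bigr => l _; rewrite !mxE.
have adiv l : in_ideal (gamma ^+ v) (a 0 l).
  by have [j Mj] := Msurj (delta_mx l 0); have := cdiv j; rewrite cE Mj -colE mxE.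
have [b' ab'] := fin_all_exists adiv; pose b := \row_l b' l.
have ab : a = gamma ^+ v *: b by apply/rowP => l; rewrite !mxE ab'.
exists b; first by rewrite ca ab -scalemxAl.
have [i0 ub|nonunit_b] := pickP (fun l => b 0 l \is a GRing.unit); first by exists i0.
have [z bz'] := fin_all_exists (fun l => nonunit_in_ideal (negbT (nonunit_b l))).
have bz : b = gamma *: \row_l z l by apply/rowP => l; rewrite bz' !mxE.
pose w := (\row_l z l *m col j1 M) 0 0.
have := mul_expr_gamma_unit_neq0 vs (unitrB_mul_gamma w uu).
by rewrite /w mulrBr -cu cE ab bz -!scalemxAl !mxE mulrA subrr eqxx.
Qed.

Section Columns.
Variable T : seq R.
Hypothesis hT : coset_reps gamma T.
Local Notation q := (size T).

(* [rho gamma s T] is convertible to [rho_trunc s]. *)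
Definition rho_trunc n j := \sum_(i < n) T`_(j %/ q ^ i %% q) * gamma ^+ i.

Lemma rho_truncS n j :
  rho_trunc n.+1 j = rho_trunc n j + T`_(j %/ q ^ n %% q) * gamma ^+ n.
Proof. exact: big_ord_recr. Qed.

Lemma rho_trunc_mod n j : rho_trunc n (j %% q ^ n) = rho_trunc n j.
Proof.
apply: eq_bigr => i _; congr (T`_ _ * _).
have -> : (q ^ n = q ^ (n - i) * q ^ i)%N by rewrite -expnD subnK // ltnW.
by rewrite -modn_divl modn_dvdm // -(subnSK (ltn_ord i)) expnS dvdn_mulr.
Qed.

Lemma q_gt1 : (1 < q)%N. Proof. by case: hT. Qed.

Lemma expq_gt0 n : (0 < q ^ n)%N. Proof. by rewrite expn_gt0 ltnW ?q_gt1. Qed.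

Lemma coset_rep_exists r : exists2 d, (d < q)%N & in_ideal gamma (r - T`_d).
Proof. by case: hT => _ _ _ /(_ r) [d [[dq rd] _]]; exists d. Qed.

Lemma coset_rep_uniq d d' :
  (d < q)%N -> (d' < q)%N -> in_ideal gamma (T`_d - T`_d') -> d = d'.
Proof.
move=> dq d'q dd'; case: hT => _ _ _ /(_ T`_d) [i [_ iu]].
by rewrite -(iu d) ?(iu d') //; split=> //; exists 0; rewrite subrr mulr0.
Qed.

Lemma rho_trunc_surj n r :
  exists2 j, (j < q ^ n)%N & in_ideal (gamma ^+ n) (r - rho_trunc n j).
Proof.
elim: n => [|n [j jlt [y ry]]].
  by exists 0%N => //; exists r; rewrite /rho_trunc big_ord0 subr0 mul1r.
have [d dq [z yz]] := coset_rep_exists y.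
exists (d * q ^ n + j)%N; first by rewrite expnS; nia.
have qn := expq_gt0 n.
rewrite rho_truncS -rho_trunc_mod modnMDl modn_small //.
rewrite divnMDl // divn_small // addn0 modn_small //.
exists z; rewrite opprD addrA ry exprSr -mulrA -yz; ring.
Qed.

Lemma rho_trunc_inj n j j' : (n <= s)%N -> (j < q ^ n)%N -> (j' < q ^ n)%N ->
  in_ideal (gamma ^+ n) (rho_trunc n j - rho_trunc n j') -> j = j'.
Proof.
elim: n j j' => [|n IH] j j' ns jlt j'lt [y ey].
  by move: jlt j'lt; rewrite expn0; lia.
have qn := expq_gt0 n.
have dq : (j %/ q ^ n < q)%N by rewrite ltn_divLR // -expnS.
have d'q : (j' %/ q ^ n < q)%N by rewrite ltn_divLR // -expnS.
move: ey; rewrite !rho_truncS (modn_small dq) (modn_small d'q).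
set d := (j %/ q ^ n)%N; set d' := (j' %/ q ^ n)%N => ey.
have low : (j %% q ^ n = j' %% q ^ n)%N.
  apply: IH; rewrite ?ltn_pmod //; first lia.
  exists (gamma * y - (T`_d - T`_d')).
  by rewrite !rho_trunc_mod mulrBr mulrA -exprSr -ey; ring.
have high : d = d'.
  have rho_low : rho_trunc n j = rho_trunc n j'.
    by rewrite -rho_trunc_mod low rho_trunc_mod.
  have : gamma ^+ n * (T`_d - T`_d' - gamma * y) = 0.
    by rewrite mulrBr mulrA -exprSr -ey rho_low; ring.
  have [/(mul_expr_gamma_unit_neq0 ns)/eqP //|/nonunit_in_ideal [w ew] _] :=
    boolP (T`_d - T`_d' - gamma * y \is a GRing.unit).
  by apply: coset_rep_uniq => //; exists (w + y); rewrite mulrDr -ew subrK.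
by rewrite (divn_eq j (q ^ n)) (divn_eq j' (q ^ n)) -/d -/d' high low.
Qed.

Local Notation N := (Nq s T).

Lemma rho_surj r : exists2 j, (j < N)%N & rho gamma s T j = r.
Proof.
have [j jN [y ry]] := rho_trunc_surj s r; exists j => //.
by apply/eqP; rewrite eq_sym -subr_eq0 ry; case: hR => _ _ -> _; rewrite mul0r.
Qed.

Lemma rho_inj j j' : (j < N)%N -> (j' < N)%N ->
  rho gamma s T j = rho gamma s T j' -> j = j'.
Proof.
move=> jN j'N jj'; apply: rho_trunc_inj jN j'N _ => //.
by exists 0; rewrite mulr0; apply/eqP; rewrite subr_eq0; apply/eqP.
Qed.

Lemma expN_gt0 k : (0 < N ^ k)%N. Proof. by rewrite !expn_gt0 ltnW ?q_gt1. Qed.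

Lemma Gentry_inj k m m' : (m < N ^ k)%N -> (m' < N ^ k)%N ->
  (forall l, (l < k)%N -> Gentry gamma s T k l m = Gentry gamma s T k l m') -> m = m'.
Proof.
elim: k m m' => [|k IH] m m' mlt m'lt eqG.
  by move: mlt m'lt; rewrite expn0; lia.
have Nk := expN_gt0 k.
have high : (m %/ N ^ k = m' %/ N ^ k)%N.
  by apply: rho_inj; rewrite ?ltn_divLR // -?expnS //; exact: (eqG 0%N).
have low : (m %% N ^ k = m' %% N ^ k)%N.
  by apply: IH; rewrite ?ltn_pmod // => l lk; exact: (eqG l.+1).
by rewrite (divn_eq m (N ^ k)) (divn_eq m' (N ^ k)) high low.
Qed.

Lemma Gentry_surj k (x : nat -> R) :
  exists2 m, (m < N ^ k)%N & forall l, (l < k)%N -> Gentry gamma s T k l m = x l.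
Proof.
elim: k x => [|k IH] x; first by exists 0%N; rewrite ?expn0.
have Nk := expN_gt0 k.
have [j jN rj] := rho_surj (x 0%N).
have [m mlt Gm] := IH (fun l => x l.+1).
exists (j * N ^ k + m)%N => [|[|l] lk /=]; first by rewrite expnS; nia.
  by rewrite divnMDl // divn_small // addn0.
by rewrite modnMDl modn_small // Gm.
Qed.

Lemma Gmx_col_inj k : injective (fun j => col j (Gmx gamma s T k)).
Proof.
move=> j j' /matrixP eqcol.
apply/val_inj/(Gentry_inj (ltn_ord j) (ltn_ord j')) => l lk.
by have := eqcol (Ordinal lk) 0; rewrite !mxE.
Qed.

Lemma Gmx_col_surj k (x : 'cV[R]_k) : exists j, col j (Gmx gamma s T k) = x.
Proof.
have [m mlt Gm] := Gentry_surj k (fun l => oapp (x^~ 0) 0 (insub l)).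
exists (Ordinal mlt); apply/matrixP => l z.
by rewrite (ord1 z) !mxE Gm // valK.
Qed.

Lemma Gmx_col_bij k : bijective (fun j => col j (Gmx gamma s T k)).
Proof.
have [colV colVK] := fin_all_exists (@Gmx_col_surj k).
by exists colV => // j; apply: Gmx_col_inj; rewrite colVK.
Qed.

End Columns.

End ChainRing.

Theorem proposition3p9 (R : finComUnitRingType) (gamma : R) (s : nat) (T : seq R)
    (hR : chain_ring gamma s) (hT : coset_reps gamma T)
    (k : nat) (hk : (1 <= k)%N) (c : 'rV[R]_(Nq s T ^ k))
    (hc : @in_Sk R gamma s T k c) (hc0 : c != 0) :
  forall i : 'I_k, exists sigma : 'S_(Nq s T ^ k),
    forall j : 'I_(Nq s T ^ k),
      c 0 j = gamma ^+ (nu_vec gamma s c) * Gmx gamma s T k i (sigma j).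
Proof.
move=> i; have [a ca] := hc.
have [b cb [i0 ub]] := mulmx_nu_vec_factor hR (Gmx_col_surj hR hT (k := k)) ca hc0.
have [sigma Gsigma] := mulmx_row_perm i (Gmx_col_bij hR hT k) ub.
by exists sigma => j; rewrite {1}cb mxE Gsigma.
Qed.
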